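(* Consider the two-layer multi-item order fulfillment problem described in the context with a single FDC ($K=1$), fixed costs $f_0\ge0$, $f_1>0$, and variable costs satisfying $a\le c_{k,t}^i\le b$ for constants $b>a>0$. Let \textsc{Cost-Comparison AdjV-Priority} be the following policy. In each period $t$, for each item $i$, set $\hat m_{1,t}^i=\min\{S_t^i,I_{1,t-1}^i\}$ if $c_{1,t}^i<\sqrt{a/b}\,c_{0,t}^i$ and $\hat m_{1,t}^i=0$ otherwise, and $\hat m_{0,t}^i=S_t^i-\hat m_{1,t}^i$. If \[\sum_{k=0,1}\Big[f_k\,\mathbb{I}\Big(\sum_{i=1}^n\hat m_{k,t}^i>0\Big)+\sum_{i=1}^nc_{k,t}^i\hat m_{k,t}^i\Big]>f_0+\sum_{i=1}^nc_{0,t}^iS_t^i,\] fulfill the whole order from the RDC ($m_{0,t}^i=S_t^i$, $m_{1,t}^i=0$); otherwise set $m_{k,t}^i=\hat m_{k,t}^i$. Then \[\mathfrak R(\textsc{Cost-Comparison AdjV-Priority})\le 1+\max\left\{\frac{f_0}{f_1},\ \sqrt{\frac ba}\right\}.\]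
   Context: Problem with one FDC (index $1$) and one RDC (index $0$, unlimited inventory). The FDC initially holds $I_{1,0}^i\ge0$ units of item $i\in[n]$, never replenished. In periods $t=1,\dots,T$ an order $\boldsymbol S_t=(S_t^i)_i$ of nonnegative integers arrives; after observing it and the variable costs $c_{k,t}^i$, the policy must immediately and irrevocably choose $m_{0,t}^i,m_{1,t}^i\ge0$ with $m_{0,t}^i+m_{1,t}^i=S_t^i$ and $m_{1,t}^i\le I_{1,t-1}^i$, where $I_{1,t}^i=I_{1,0}^i-\sum_{\tau\le t}m_{1,\tau}^i$. Period cost $\sum_{k=0,1}[f_k\mathbb{I}(\sum_im_{k,t}^i>0)+\sum_ic_{k,t}^im_{k,t}^i]$; total cost is the sum over periods. Online policies decide in period $t$ using only fixed costs, initial inventories and orders/variable costs up to $t$ (and the known constants $a,b$). $\mathrm{ALG}(I)$: (expected) total cost; $\mathrm{OPT}(I)$: offline optimal total cost. $\mathfrak R(\mathrm{ALG})$ is the supremum of $\mathrm{ALG}(I)/\mathrm{OPT}(I)$ over all $n,T$, initial inventories, variable costs in $[a,b]$ and order sequences. *)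

From mathcomp Require Import all_boot all_order all_algebra.
From mathcomp Require Import all_classical all_reals.
Set Implicit Arguments. Unset Strict Implicit. Unset Printing Implicit Defensive.
Import Order.TTheory GRing.Theory Num.Theory.
Local Open Scope classical_set_scope.
Local Open Scope ring_scope.

(* Instance data (one FDC = location 1, one RDC = location 0):
   n items ('I_n), periods t = 0,...,T-1 (paper's t = 1,...,T),
   I0 i = initial FDC inventory of item i,
   ord t i = ordered quantity of item i in period t,
   c0 t i, c1 t i = variable costs at RDC / FDC.
   A decision in period t is given by the FDC shipment m1 : 'I_n -> nat,
   and m0 i = ord t i - m1 i (with m1 i <= ord t i). *)

Section Model.
Variables (R : realType) (n : nat).
Variables (f0 f1 : R).
Variables (ord : nat -> 'I_n -> nat) (c0 c1 : nat -> 'I_n -> R).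

Definition period_cost (t : nat) (m1 : 'I_n -> nat) : R :=
  f0 * ((0 < \sum_(i < n) (ord t i - m1 i))%N)%:R
  + f1 * ((0 < \sum_(i < n) m1 i)%N)%:R
  + \sum_(i < n) (c0 t i * (ord t i - m1 i)%:R + c1 t i * (m1 i)%:R).

Definition plan_cost (T : nat) (m1 : nat -> 'I_n -> nat) : R :=
  \sum_(t < T) period_cost t (m1 t).

(* offline feasibility: m1 <= S, and cumulative FDC shipments never exceed
   the initial inventory (equivalently I_{1,t-1} >= m_{1,t} every period) *)
Definition feasible (I0 : 'I_n -> nat) (T : nat) (m1 : nat -> 'I_n -> nat) : Prop :=
  forall (t : nat) (i : 'I_n), (t < T)%N ->
    (m1 t i <= ord t i)%N /\ (\sum_(tau < t.+1) m1 tau i <= I0 i)%N.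

Definition OPT (I0 : 'I_n -> nat) (T : nat) : R :=
  inf [set plan_cost T m1 | m1 in [set m | feasible I0 T m]].

Variables (a b : R).

Definition hat_m1 (Iprev : 'I_n -> nat) (t : nat) (i : 'I_n) : nat :=
  if c1 t i < Num.sqrt (a / b) * c0 t i then minn (ord t i) (Iprev i) else 0%N.

Definition alg_m1 (Iprev : 'I_n -> nat) (t : nat) : 'I_n -> nat :=
  if period_cost t (hat_m1 Iprev t) > f0 + \sum_(i < n) c0 t i * (ord t i)%:R
  then (fun _ => 0%N) else hat_m1 Iprev t.

Fixpoint alg_inv (I0 : 'I_n -> nat) (k : nat) : 'I_n -> nat :=
  match k with
  | 0 => I0
  | k'.+1 => fun i => (alg_inv I0 k' i - alg_m1 (alg_inv I0 k') k' i)%N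
  end.

Definition alg_plan (I0 : 'I_n -> nat) : nat -> 'I_n -> nat :=
  fun t => alg_m1 (alg_inv I0 t) t.

Definition ALG (I0 : 'I_n -> nat) (T : nat) : R := plan_cost T (alg_plan I0).

End Model.

(* Compare the policy, period by period, with an arbitrary feasible plan z.
   A unit the policy ships from the FDC beyond z is charged an extra b, and a
   unit z ships from the FDC that the policy's remaining stock cannot cover is
   credited b.  With lam = max(f0/f1, sqrt(b/a)), each period then costs the
   policy at most (1 + lam) times the cost of z: the FDC fixed cost is paid for
   by f0 <= lam f1; an item sent from the FDC only when sqrt(b/a) c1 < c0 has
   c1 <= c0 and b <= sqrt(b/a) c0, so its FDC cost plus the charge b stays
   below (1 + sqrt(b/a)) c0; any other item has c0 <= sqrt(b/a) c1.  For each
   item, the stock that the policy lacks when z needs it was consumed earlier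
   in excess of z, so over the horizon the credits never exceed the charges. *)

From mathcomp Require Import all_boot all_order all_algebra.
From mathcomp Require Import all_classical all_reals.
From mathcomp Require Import lra zify.
Import Order.TTheory GRing.Theory Num.Theory.
Set Implicit Arguments. Unset Strict Implicit. Unset Printing Implicit Defensive.

Lemma sum_shortfall_le_sum_excess (I y z : nat -> nat) (T : nat) :
  (forall k, I k.+1 = I k - y k) ->
  (forall k, k < T -> \sum_(t < k.+1) z t <= I 0) ->
  \sum_(t < T) (z t - I t) <= \sum_(t < T) (y t - z t).
Proof.
move=> I_next z_cum.
(* [I 0 - \sum_(t < k) z t - I k] is the stock consumed beyond the plan [z]
   that is still to be matched by a later shortfall. *)
suff /(_ T (leqnn T)) : forall k, k <= T ->
    \sum_(t < k) (z t - I t) + (I 0 - \sum_(t < k) z t - I k)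
      <= \sum_(t < k) (y t - z t).
  by apply: leq_trans; rewrite leq_addr.
elim=> [|k IHk] k_lt_T; first by rewrite !big_ord0 subn0 subnn.
have := IHk (ltnW k_lt_T); have := z_cum k k_lt_T.
rewrite !big_ord_recr /= I_next; lia.
Qed.

Lemma fun0_le_sum_eq0 (I : finType) (F m : I -> nat) :
  \sum_i F i = 0 -> (forall i, m i <= F i) -> m = fun=> 0.
Proof.
move=> /eqP; rewrite sum_nat_eq0 => /forallP F0 m_le; apply: boolp.funext => i.
by apply/eqP; rewrite -leqn0 -(eqP (F0 i)) m_le.
Qed.

Local Open Scope ring_scope.

Section SqrtRatio.
Variables (R : rcfType) (a b : R).
Hypotheses (a_gt0 : 0 < a) (a_le_b : a <= b).
Local Notation r := (Num.sqrt (b / a)).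

Let b_gt0 : 0 < b. Proof. exact: lt_le_trans a_le_b. Qed.
Let ba_ge0 : 0 <= b / a. Proof. by rewrite divr_ge0 // ltW. Qed.

Lemma sqrt_ratio_ge1 : 1 <= r.
Proof. by rewrite -sqrtr1 ler_sqrt // ler_pdivlMr // mul1r. Qed.

Lemma sqrt_ratio_sqrM : r ^+ 2 * a = b.
Proof. by rewrite sqr_sqrtr // divfK // gt_eqF. Qed.

Lemma cheap_testE (c0 c1 : R) : (c1 < Num.sqrt (a / b) * c0) = (r * c1 < c0).
Proof.
have r_gt0 : 0 < r by apply: lt_le_trans sqrt_ratio_ge1.
by rewrite -invf_div sqrtrV // ltr_pdivlMl.
Qed.

Lemma cheap_item_b_le (c0 c1 : R) : a <= c1 -> r * c1 <= c0 -> b <= r * c0.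
Proof.
move=> a_le_c1 cheap; have r_gt0 : 0 < r by apply: lt_le_trans sqrt_ratio_ge1.
rewrite -[leLHS]sqrt_ratio_sqrM expr2 -mulrA ler_pM2l //.
by apply: le_trans cheap; rewrite ler_pM2l.
Qed.

Lemma cheap_item_saving (c0 c1 : R) : a <= c1 -> r * c1 <= c0 -> c1 + b <= (1 + r) * c0.
Proof.
move=> a_le_c1 cheap; rewrite mulrDl mul1r lerD ?(cheap_item_b_le a_le_c1) //.
by apply: le_trans cheap; rewrite ler_peMl ?sqrt_ratio_ge1 //; apply: le_trans a_le_c1; apply: ltW.
Qed.

End SqrtRatio.

Section ItemCost.
Variables (R : realFieldType) (b lam c0 c1 : R) (S h z : nat).
Hypotheses (lam_ge0 : 0 <= lam) (c0_ge0 : 0 <= c0) (c1_ge0 : 0 <= c1) (z_le_S : (z <= S)%N).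

Lemma cheap_item_cost : (h <= S)%N -> c0 <= b -> c1 + b <= (1 + lam) * c0 ->
  c0 * (S - h)%:R + c1 * h%:R + b * (h - z)%:R
    <= (1 + lam) * (c0 * (S - z)%:R + c1 * z%:R) + b * (z - h)%:R.
Proof.
move=> h_le_S c0_le_b saving.
rewrite (natrB _ h_le_S) (natrB _ z_le_S).
have hS : (h%:R : R) <= S%:R by rewrite ler_nat.
have zS : (z%:R : R) <= S%:R by rewrite ler_nat.
have z0 := ler0n R z.
case: (leqP z h) => [z_le_h | /ltnW h_le_z].
- rewrite (natrB _ z_le_h) (eqP (_ : z - h == 0)%N) ?subn_eq0 //.
  have zh : (z%:R : R) <= h%:R by rewrite ler_nat.
  have : 0 <= (h%:R - z%:R) * ((1 + lam) * c0 - c1 - b) by apply: mulr_ge0; lra.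
  have : 0 <= lam * c0 * (S%:R - h%:R) by rewrite mulr_ge0 ?mulr_ge0 // subr_ge0.
  have : 0 <= lam * c1 * z%:R by rewrite mulr_ge0 ?mulr_ge0.
  lra.
- rewrite (natrB _ h_le_z) (eqP (_ : h - z == 0)%N) ?subn_eq0 //.
  have hz : (h%:R : R) <= z%:R by rewrite ler_nat.
  have : 0 <= (z%:R - h%:R) * (b - c0) by rewrite mulr_ge0 // subr_ge0.
  have : 0 <= c1 * (z%:R - h%:R) by rewrite mulr_ge0 // subr_ge0.
  have : 0 <= lam * c0 * (S%:R - z%:R) by rewrite mulr_ge0 ?mulr_ge0 // subr_ge0.
  have : 0 <= lam * c1 * z%:R by rewrite mulr_ge0 ?mulr_ge0.
  lra.
Qed.

Lemma dear_item_cost : c0 <= (1 + lam) * c1 ->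
  c0 * S%:R <= (1 + lam) * (c0 * (S - z)%:R + c1 * z%:R).
Proof.
move=> dear; rewrite (natrB _ z_le_S).
have zS : (z%:R : R) <= S%:R by rewrite ler_nat.
have : 0 <= z%:R * ((1 + lam) * c1 - c0) by rewrite mulr_ge0 // subr_ge0.
have : 0 <= lam * c0 * (S%:R - z%:R) by rewrite mulr_ge0 ?mulr_ge0 // subr_ge0.
lra.
Qed.

End ItemCost.

Section Model.
Variables (R : realType) (f0 f1 a b lam : R).
Hypotheses (f0_ge0 : 0 <= f0) (f1_ge0 : 0 <= f1) (a_gt0 : 0 < a) (a_le_b : a <= b).
Hypotheses (sqrt_le_lam : Num.sqrt (b / a) <= lam) (f0_le_lam_f1 : f0 <= lam * f1).
Variables (n : nat) (ord : nat -> 'I_n -> nat) (c0 c1 : nat -> 'I_n -> R).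

Local Notation P := (period_cost f0 f1 ord c0 c1).
Local Notation hat := (hat_m1 ord c0 c1 a b).
Local Notation alg := (alg_m1 f0 f1 ord c0 c1 a b).
Local Notation inv := (alg_inv f0 f1 ord c0 c1 a b).
Local Notation plan := (alg_plan f0 f1 ord c0 c1 a b).

Let b_ge0 : 0 <= b. Proof. exact: le_trans (ltW a_gt0) a_le_b. Qed.
Let lam_ge0 : 0 <= lam.
Proof. exact: le_trans ler01 (le_trans (sqrt_ratio_ge1 a_gt0 a_le_b) sqrt_le_lam). Qed.

Definition variable_cost (t : nat) (m : 'I_n -> nat) : R :=
  \sum_(i < n) (c0 t i * (ord t i - m i)%:R + c1 t i * (m i)%:R).

Lemma period_costE t m : P t m =
  f0 * (0 < \sum_(i < n) (ord t i - m i))%:R + f1 * (0 < \sum_(i < n) m i)%:R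
  + variable_cost t m.
Proof. by []. Qed.

Lemma rdc_only_costE t : P t (fun=> 0%N) =
  f0 * (0 < \sum_(i < n) ord t i)%:R + \sum_(i < n) c0 t i * (ord t i)%:R.
Proof.
rewrite period_costE big1_eq /= mulr0 addr0 /variable_cost.
congr (_ + _); first by under eq_bigr do rewrite subn0.
by apply: eq_bigr => i _; rewrite subn0 mulr0 addr0.
Qed.

Lemma hat_le_ord Iprev t i : (hat Iprev t i <= ord t i)%N.
Proof. by rewrite /hat_m1; case: ifP => // _; apply: geq_minl. Qed.

Lemma alg_le_hat Iprev t i : (alg Iprev t i <= hat Iprev t i)%N.
Proof. by rewrite /alg_m1; case: ifP. Qed.

Lemma alg_cost_le_hat Iprev t : P t (alg Iprev t) <= P t (hat Iprev t).
Proof.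
rewrite /alg_m1; case: ifP => // /ltW; apply: le_trans.
by rewrite rdc_only_costE lerD2r; apply: ler_piMr; rewrite // lern1 leq_b1.
Qed.

Lemma alg_cost_le_rdc_only Iprev t : P t (alg Iprev t) <= P t (fun=> 0%N).
Proof.
rewrite /alg_m1; case: ifP => // /negbT; rewrite ltNge negbK.
have [ord0|ord_gt0] := posnP (\sum_(i < n) ord t i).
  by rewrite (fun0_le_sum_eq0 ord0 (hat_le_ord Iprev t)).
by rewrite rdc_only_costE ord_gt0 mulr1.
Qed.

Section Period.
Variables (t : nat) (Iprev : 'I_n -> nat).
Hypothesis costs_t : forall i, a <= c0 t i <= b /\ a <= c1 t i <= b.

Let c0_ge0 i : 0 <= c0 t i.
Proof. by have [/andP[+ _] _] := costs_t i; apply: le_trans; apply: ltW. Qed.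

Let c1_ge0 i : 0 <= c1 t i.
Proof. by have [_ /andP[+ _]] := costs_t i; apply: le_trans; apply: ltW. Qed.

Lemma hat_item_cost i (z : nat) : (z <= ord t i)%N ->
  c0 t i * (ord t i - hat Iprev t i)%:R + c1 t i * (hat Iprev t i)%:R
    + b * (hat Iprev t i - z)%:R
  <= (1 + lam) * (c0 t i * (ord t i - z)%:R + c1 t i * z%:R) + b * (z - Iprev i)%:R.
Proof.
move=> z_le_S; have [/andP[_ c0_le_b] /andP[a_le_c1 _]] := costs_t i.
rewrite /hat_m1 cheap_testE //; case: ifP => [/ltW cheap | /negbT dear].
- have saving : c1 t i + b <= (1 + lam) * c0 t i.
    apply: le_trans (cheap_item_saving a_gt0 a_le_b a_le_c1 cheap) _.
    by rewrite ler_wpM2r // lerD2l.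
  apply: le_trans (cheap_item_cost lam_ge0 (c0_ge0 i) (c1_ge0 i) z_le_S
                     (geq_minl _ _) c0_le_b saving) _.
  (* [z - minn (ord t i) (Iprev i) = z - Iprev i] as [z <= ord t i]. *)
  rewrite lerD2l ler_wpM2l // ler_nat.
  by move: z_le_S; lia.
- have dear' : c0 t i <= (1 + lam) * c1 t i.
    rewrite -leNgt in dear; apply: le_trans dear _.
    by rewrite ler_wpM2r // (le_trans sqrt_le_lam) // lerDr.
  rewrite subn0 sub0n !mulr0n !mulr0 !addr0.
  apply: le_trans (dear_item_cost lam_ge0 (c0_ge0 i) z_le_S dear') _.
  by rewrite lerDl mulr_ge0.
Qed.

Lemma hat_reserve_le_rdc_cost :
  b * \sum_(i < n) (hat Iprev t i)%:R <= lam * \sum_(i < n) c0 t i * (ord t i)%:R.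
Proof.
rewrite !mulr_sumr; apply: ler_sum => i _; have [_ /andP[a_le_c1 _]] := costs_t i.
rewrite /hat_m1 cheap_testE //; case: ifP => [/ltW cheap | _].
  rewrite mulrA; apply: ler_pM; rewrite ?mulr_ge0 ?ler_nat ?geq_minl //.
  exact: le_trans (cheap_item_b_le a_gt0 a_le_b a_le_c1 cheap) (ler_wpM2r (c0_ge0 i) sqrt_le_lam).
by rewrite mulr0n mulr0 !mulr_ge0.
Qed.

Lemma period_bound_no_fdc :
  P t (alg Iprev t) + b * \sum_(i < n) (alg Iprev t i)%:R <= (1 + lam) * P t (fun=> 0%N).
Proof.
rewrite mulrDl mul1r lerD ?alg_cost_le_rdc_only //.
apply: le_trans (ler_wpM2l b_ge0 _) (le_trans hat_reserve_le_rdc_cost _).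
  by apply: ler_sum => i _; rewrite ler_nat alg_le_hat.
by rewrite ler_wpM2l ?rdc_only_costE ?lerDr ?mulr_ge0.
Qed.

Lemma period_bound_fdc (z : 'I_n -> nat) : (forall i, z i <= ord t i)%N ->
  (0 < \sum_(i < n) z i)%N ->
  P t (alg Iprev t) + b * \sum_(i < n) (alg Iprev t i - z i)%:R
    <= (1 + lam) * P t z + b * \sum_(i < n) (z i - Iprev i)%:R.
Proof.
move=> z_le_ord z_gt0.
have excess_le : b * \sum_(i < n) (alg Iprev t i - z i)%:R
                  <= b * \sum_(i < n) (hat Iprev t i - z i)%:R.
  by rewrite ler_wpM2l // ler_sum // => i _; rewrite ler_nat leq_sub2r ?alg_le_hat.
have items : variable_cost t (hat Iprev t) + b * \sum_(i < n) (hat Iprev t i - z i)%:R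
    <= (1 + lam) * variable_cost t z + b * \sum_(i < n) (z i - Iprev i)%:R.
  rewrite /variable_cost !mulr_sumr -!big_split ler_sum // => i _.
  exact: hat_item_cost.
have hat_cost : P t (hat Iprev t) <= f0 + f1 + variable_cost t (hat Iprev t).
  by rewrite period_costE !lerD2r ?lerD // ler_piMr // lern1 leq_b1.
pose x := f0 * (0 < \sum_(i < n) (ord t i - z i))%:R.
have z_cost : P t z = x + f1 + variable_cost t z by rewrite period_costE z_gt0 mulr1.
have fixed_cost : f0 + f1 <= (1 + lam) * (x + f1).
  apply: (@le_trans _ _ ((1 + lam) * f1)); first by rewrite mulrDl mul1r addrC lerD2l.
  by rewrite ler_wpM2l ?lerDr ?mulr_ge0 ?addr_ge0.
apply: le_trans (lerD (alg_cost_le_hat Iprev t) excess_le) _.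
apply: le_trans (lerD hat_cost (lexx _)) _.
rewrite -addrA; apply: le_trans (lerD (lexx _) items) _.
by rewrite z_cost mulrDr !addrA !lerD2r.
Qed.

Lemma period_bound (z : 'I_n -> nat) : (forall i, z i <= ord t i)%N ->
  P t (alg Iprev t) + b * \sum_(i < n) (alg Iprev t i - z i)%:R
    <= (1 + lam) * P t z + b * \sum_(i < n) (z i - Iprev i)%:R.
Proof.
move=> z_le_ord; have [z0 | z_gt0] := posnP (\sum_(i < n) z i); last exact: period_bound_fdc.
rewrite (fun0_le_sum_eq0 z0 (fun i => leqnn (z i))).
under eq_bigr do rewrite subn0.
under [X in _ <= _ + b * X]eq_bigr do rewrite sub0n.
by rewrite big1_eq mulr0 addr0 period_bound_no_fdc.
Qed.

End Period.

Lemma ALG_le_plan_cost (I0 : 'I_n -> nat) (T : nat) (z : nat -> 'I_n -> nat) :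
  (forall t i, (t < T)%N -> a <= c0 t i <= b /\ a <= c1 t i <= b) ->
  feasible ord I0 T z ->
  ALG f0 f1 ord c0 c1 a b I0 T <= (1 + lam) * plan_cost f0 f1 ord c0 c1 T z.
Proof.
move=> costs z_feas.
pose excess t := \sum_(i < n) (plan I0 t i - z t i)%:R : R.
pose shortfall t := \sum_(i < n) (z t i - inv I0 t i)%:R : R.
have periods : \sum_(t < T) P t (plan I0 t) + b * \sum_(t < T) excess t
    <= (1 + lam) * \sum_(t < T) P t (z t) + b * \sum_(t < T) shortfall t.
  rewrite !mulr_sumr -!big_split ler_sum // => t _.
  apply: period_bound => [i | i]; first exact: costs.
  by have [] := z_feas t i (ltn_ord t).
have inventory : \sum_(t < T) shortfall t <= \sum_(t < T) excess t.
  rewrite exchange_big [leRHS]exchange_big ler_sum // => i _.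
  rewrite -!natr_sum ler_nat.
  apply: (@sum_shortfall_le_sum_excess (inv I0 ^~ i) (plan I0 ^~ i) (z ^~ i)) => // k k_lt_T.
  by have [] := z_feas k i k_lt_T.
rewrite -(lerD2r (b * \sum_(t < T) excess t)).
by apply: le_trans periods _; rewrite lerD2l ler_wpM2l.
Qed.

End Model.

Theorem theorem5 (R : realType) (f0 f1 a b : R) :
  0 <= f0 -> 0 < f1 -> 0 < a -> a < b ->
  forall (n T : nat) (I0 : 'I_n -> nat) (ord : nat -> 'I_n -> nat)
         (c0 c1 : nat -> 'I_n -> R),
    (forall (t : nat) (i : 'I_n), (t < T)%N ->
       a <= c0 t i <= b /\ a <= c1 t i <= b) ->
    ALG f0 f1 ord c0 c1 a b I0 T
      <= (1 + Num.max (f0 / f1) (Num.sqrt (b / a))) * OPT f0 f1 ord c0 c1 I0 T.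
Proof.
move=> f0_ge0 f1_gt0 a_gt0 /ltW a_le_b n T I0 ord c0 c1 costs.
set M := Num.max _ _.
have sqrt_le_M : Num.sqrt (b / a) <= M by rewrite le_max lexx orbT.
have f0_le_M_f1 : f0 <= M * f1 by rewrite -ler_pdivrMr // le_max lexx.
have M_gt0 : 0 < 1 + M.
  by rewrite ltr_pwDl // (le_trans _ sqrt_le_M) // (le_trans ler01) ?sqrt_ratio_ge1.
rewrite -ler_pdivrMl //; apply: lb_le_inf.
  exists (plan_cost f0 f1 ord c0 c1 T (fun _ _ => 0%N)), (fun _ _ => 0%N) => //.
  by move=> t i _; rewrite big1.
move=> _ [z z_feas <-]; rewrite ler_pdivrMl //.
exact: (ALG_le_plan_cost f0_ge0 (ltW f1_gt0) a_gt0 a_le_b sqrt_le_M f0_le_M_f1 costs z_feas).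
Qed.
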